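(* Let $(t_i)_{i\in\mathbb{N}}$ be a sequence of real numbers that are algebraically independent over $\mathbb{Q}$, and let $A=\{P_{i,j} : i,j\in\mathbb{N},\ i<j\}\subseteq\mathbb{R}^2$, where $P_{i,j} = (t_i + t_j,\ t_i^2 + t_it_j + t_j^2)$. Then for every finite subset $P\subseteq A$ there exists $P'\subseteq P$ with $|P'|\ge |P|/2$ such that no three points of $P'$ are collinear. *)

From Stdlib Require Import Reals.
From HB Require Import structures.
From mathcomp Require Import all_boot all_order all_algebra.
From mathcomp Require Import Rstruct.
From mathcomp Require Import mpoly.

Set Implicit Arguments.
Unset Strict Implicit.
Unset Printing Implicit Defensive.

Import GRing.Theory Num.Theory.
Local Open Scope ring_scope.

Definition alg_indep_Q (t : nat -> R) : Prop :=
  forall (n : nat) (f : 'I_n -> nat), injective f ->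
  forall p : {mpoly rat[n]}, p != 0 ->
    (map_mpoly (ratr : rat -> R) p).@[fun i => t (f i)] != 0.

Definition Pt (t : nat -> R) (i j : nat) : R * R :=
  (t i + t j, t i ^+ 2 + t i * t j + t j ^+ 2).

Definition inA (t : nat -> R) (x : R * R) : Prop :=
  exists i j : nat, (i < j)%N /\ x = Pt t i j.

Definition collinear (p q r : R * R) : Prop :=
  exists a b c : R, (a != 0 \/ b != 0) /\
    a * p.1 + b * p.2 = c /\ a * q.1 + b * q.2 = c /\ a * r.1 + b * r.2 = c.

Definition no_three_collinear (S : seq (R * R)) : Prop :=
  forall p q r, p \in S -> q \in S -> r \in S ->
    p != q -> q != r -> p != r -> ~ collinear p q r.

(** Read a point P_{i,j} as the edge {i,j} of a graph on the indices.  A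
    2-colouring of the vertices cuts at least half of any finite edge set
    (colour the vertices one by one, each time cutting at least half of the
    edges back to earlier vertices); keep the points of the cut edges.  Three
    cut edges are distinct edges of a bipartite graph, hence never form a
    triangle.  Collinearity of their points is the vanishing of a determinant
    that is an integer polynomial in the t_i, so by algebraic independence it
    can only happen if that polynomial vanishes identically.  Relabelled by
    first occurrence, three edges have endpoints among 0..5, and evaluating
    the determinant at one integer point shows it is nonzero for every such
    configuration except the triangle (for which P_{a,b}, P_{b,c}, P_{a,c}
    all lie on y = (a + b + c) x - (ab + bc + ca)). *)

From Stdlib Require Import Reals.
From HB Require Import structures.
From mathcomp Require Import all_boot all_order all_algebra.
From mathcomp Require Import Rstruct.
From mathcomp Require Import mpoly.
From mathcomp Require Import ring zify.

Set Implicit Arguments.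
Unset Strict Implicit.
Unset Printing Implicit Defensive.

Import GRing.Theory.

Local Open Scope ring_scope.

Definition verts (T : Type) (e1 e2 e3 : T * T) : seq T :=
  [:: e1.1; e1.2; e2.1; e2.2; e3.1; e3.2].

Definition same_edge (T : eqType) (e f : T * T) :=
  (e == f) || (e == (f.2, f.1)).

Definition distinct3 (T : eqType) (e1 e2 e3 : T * T) :=
  [&& ~~ same_edge e1 e2, ~~ same_edge e1 e3 & ~~ same_edge e2 e3].

Definition cut (T : Type) (c : T -> bool) (e : T * T) := c e.1 != c e.2.

Lemma distinct3_map (T U : eqType) (f : T -> U) (e1 e2 e3 : T * T) :
    {in verts e1 e2 e3 &, injective f} ->
  distinct3 (f e1.1, f e1.2) (f e2.1, f e2.2) (f e3.1, f e3.2)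
  = distinct3 e1 e2 e3.
Proof.
move=> f_inj; rewrite /distinct3 /same_edge !xpair_eqE.
by rewrite !(inj_in_eq f_inj) // !inE eqxx ?orbT.
Qed.

Section EdgeDeterminant.
Variable F : comNzRingType.

Definition pt (a b : F) : F * F := (a + b, a ^+ 2 + a * b + b ^+ 2).

Definition edge_pt (x : nat -> F) (e : nat * nat) : F * F := pt (x e.1) (x e.2).

Definition det3 (p q r : F * F) : F :=
  (q.1 - p.1) * (r.2 - p.2) - (r.1 - p.1) * (q.2 - p.2).

Definition edge_det (x : nat -> F) (e1 e2 e3 : nat * nat) : F :=
  det3 (edge_pt x e1) (edge_pt x e2) (edge_pt x e3).

Lemma edge_pt_same_edge (x : nat -> F) (e f : nat * nat) :
  same_edge e f -> edge_pt x e = edge_pt x f.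
Proof.
by case/orP=> /eqP -> //; rewrite /edge_pt /pt /=; congr pair; ring.
Qed.

Lemma eq_edge_det (x y : nat -> F) (e1 e2 e3 : nat * nat) :
  {in verts e1 e2 e3, x =1 y} -> edge_det x e1 e2 e3 = edge_det y e1 e2 e3.
Proof. by move=> xy; rewrite /edge_det /edge_pt !xy // !inE eqxx ?orbT. Qed.

End EdgeDeterminant.

Lemma rmorph_edge_det (F G : comNzRingType) (phi : {rmorphism F -> G})
    (x : nat -> F) (e1 e2 e3 : nat * nat) :
  phi (edge_det x e1 e2 e3) = edge_det (phi \o x) e1 e2 e3.
Proof.
by rewrite /edge_det /det3 /edge_pt /pt /=
  !(rmorphB, rmorphD, rmorphM, rmorphXn).
Qed.

Lemma det3_eq0_of_line (F : idomainType) (p q r : F * F) (a b c : F) :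
    a != 0 \/ b != 0 ->
    a * p.1 + b * p.2 = c -> a * q.1 + b * q.2 = c -> a * r.1 + b * r.2 = c ->
  det3 p q r = 0.
Proof.
move=> nz_ab lp lq lr.
have lpq : a * (q.1 - p.1) + b * (q.2 - p.2) = 0.
  by rewrite -(subrr c) -{1}lq -lp; ring.
have lpr : a * (r.1 - p.1) + b * (r.2 - p.2) = 0.
  by rewrite -(subrr c) -{1}lr -lp; ring.
have a_det : a * det3 p q r = 0.
  have -> : a * det3 p q r = (r.2 - p.2) * (a * (q.1 - p.1) + b * (q.2 - p.2))
                           - (q.2 - p.2) * (a * (r.1 - p.1) + b * (r.2 - p.2)).
    by rewrite /det3; ring.
  by rewrite lpq lpr !mulr0 subrr.
have b_det : b * det3 p q r = 0.
  have -> : b * det3 p q r = (q.1 - p.1) * (a * (r.1 - p.1) + b * (r.2 - p.2))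
                           - (r.1 - p.1) * (a * (q.1 - p.1) + b * (q.2 - p.2)).
    by rewrite /det3; ring.
  by rewrite lpq lpr !mulr0 subrr.
case: nz_ab => nz; apply/eqP; [move/eqP: a_det | move/eqP: b_det];
  by rewrite mulf_eq0 (negbTE nz).
Qed.

Fixpoint bool_seqs (n : nat) : seq (seq bool) :=
  if n is n'.+1 then [seq b :: s | b <- [:: true; false], s <- bool_seqs n']
  else [:: [::]].

Lemma mem_bool_seqs (s : seq bool) : s \in bool_seqs (size s).
Proof. by elim: s => //= b s IH; case: b; rewrite !mem_cat map_f ?orbT. Qed.

(* Found by search: the determinant of every non-triangle configuration on
   0..5 is nonzero at this point. *)
Definition witness (i : nat) : int := nth 0 [:: 0; 1; 2; 3; 4; 7] i.

Definition shape_ok (e1 e2 e3 : nat * nat) : bool :=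
  distinct3 e1 e2 e3 ==>
    (edge_det witness e1 e2 e3 != 0)
    || ~~ has (fun b => [&& cut (nth false b) e1, cut (nth false b) e2
                          & cut (nth false b) e3]) (bool_seqs 6).

(* Every configuration of three edges whose s-th endpoint is at most s, i.e.
   every configuration relabelled by first occurrence. *)
Lemma all_shapes_ok :
  all (fun a0 => all (fun a1 => all (fun a2 => all (fun a3 =>
  all (fun a4 => all (fun a5 => shape_ok (a0, a1) (a2, a3) (a4, a5))
  (iota 0 6)) (iota 0 5)) (iota 0 4)) (iota 0 3)) (iota 0 2)) (iota 0 1).
Proof. by vm_compute. Qed.

Lemma shape_det_neq0 (e1 e2 e3 : nat * nat) (k : nat -> bool) :
    (forall s, (s < 6)%N -> (nth 0%N (verts e1 e2 e3) s <= s)%N) ->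
    distinct3 e1 e2 e3 -> cut k e1 -> cut k e2 -> cut k e3 ->
  edge_det witness e1 e2 e3 != 0.
Proof.
case: e1 e2 e3 => [a0 a1] [a2 a3] [a4 a5] le_pos dist k01 k23 k45.
have in_iota s :
    (s < 6)%N -> nth 0%N [:: a0; a1; a2; a3; a4; a5] s \in iota 0 s.+1.
  by move=> lt_s6; rewrite mem_iota ltnS le_pos.
move: all_shapes_ok.
move=> /allP/(_ _ (in_iota 0 isT)) /allP/(_ _ (in_iota 1 isT))
  /allP/(_ _ (in_iota 2 isT)) /allP/(_ _ (in_iota 3 isT))
  /allP/(_ _ (in_iota 4 isT)) /allP/(_ _ (in_iota 5 isT)).
rewrite /shape_ok dist implyTb => /orP[// | /negP[]].
apply/hasP; exists (mkseq k 6).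
  by have := mem_bool_seqs (mkseq k 6); rewrite size_mkseq.
have k6 s : (s < 6)%N ->
    nth false (mkseq k 6) (nth 0%N [:: a0; a1; a2; a3; a4; a5] s)
    = k (nth 0%N [:: a0; a1; a2; a3; a4; a5] s).
  by move=> lt_s6; rewrite nth_mkseq // (leq_ltn_trans (le_pos s lt_s6)).
rewrite /cut (k6 0) ?(k6 1) ?(k6 2) ?(k6 3) ?(k6 4) ?(k6 5) //.
exact/and3P.
Qed.

Definition mvar (R : nzRingType) (n i : nat) : {mpoly R[n]} :=
  if insub i is Some j then 'X_j else 0.

Lemma mvarE (R : nzRingType) (n i : nat) (lt_in : (i < n)%N) :
  mvar R n i = 'X_(Ordinal lt_in).
Proof. by rewrite /mvar insubT. Qed.

Lemma map_mpoly_mvar (R S : nzRingType) (f : {rmorphism R -> S}) (n i : nat) :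
  map_mpoly f (mvar R n i) = mvar S n i.
Proof. by rewrite /mvar; case: insub => [j|]; rewrite ?map_mpolyX ?rmorph0. Qed.

Lemma meval_edge_det_mvar (R : comNzRingType) (U : seq nat) (w : nat -> R)
    (e1 e2 e3 : nat * nat) :
  {subset verts e1 e2 e3 <= U} ->
  (edge_det (fun a => mvar R (size U) (index a U)) e1 e2 e3).@[fun j =>
     w (nth 0%N U j)] = edge_det w e1 e2 e3.
Proof.
move=> sub_VU; rewrite rmorph_edge_det; apply: eq_edge_det => a /sub_VU a_U /=.
by rewrite (mvarE _ (etrans (index_mem _ _) a_U)) mevalXU nth_index.
Qed.

Lemma edge_det_alg_indep (t : nat -> R) (y : nat -> int)
    (e1 e2 e3 : nat * nat) :
  alg_indep_Q t -> edge_det y e1 e2 e3 != 0 -> edge_det t e1 e2 e3 != 0.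
Proof.
move=> indep_t y_neq0.
pose U := undup (verts e1 e2 e3).
have sub_VU : {subset verts e1 e2 e3 <= U} by move=> a; rewrite mem_undup.
pose p := edge_det (fun a => mvar rat (size U) (index a U)) e1 e2 e3.
have p_neq0 : p != 0.
  apply: contraNneq y_neq0 => p0.
  have := meval_edge_det_mvar (fun a => (y a)%:~R : rat) sub_VU.
  rewrite -/p p0 meval0 -(rmorph_edge_det intr) => /esym/eqP.
  by rewrite intq_eq0.
have nth_inj : injective (fun j : 'I_(size U) => nth 0%N U j).
  by move=> i j /eqP; rewrite nth_uniq ?undup_uniq // => /eqP/val_inj.
have := indep_t _ _ nth_inj p p_neq0.
rewrite /p rmorph_edge_det
  (eq_edge_det (y := fun a => mvar R (size U) (index a U))).
  by rewrite meval_edge_det_mvar.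
by move=> a _; rewrite /= map_mpoly_mvar.
Qed.

Lemma edge_det_cut_neq0 (t : nat -> R) (c : nat -> bool)
    (e1 e2 e3 : nat * nat) :
    alg_indep_Q t -> distinct3 e1 e2 e3 -> cut c e1 -> cut c e2 -> cut c e3 ->
  edge_det t e1 e2 e3 != 0.
Proof.
move=> indep_t dist c1 c2 c3.
pose V := verts e1 e2 e3; pose f a := index a V.
pose fe (e : nat * nat) := (f e.1, f e.2).
apply: (edge_det_alg_indep (y := witness \o f)) => //.
apply: (shape_det_neq0 (e1 := fe e1) (e2 := fe e2) (e3 := fe e3)
                       (k := fun j => c (nth 0%N V j))).
- move=> s lt_s6; rewrite (_ : verts _ _ _ = map f V) // (nth_map 0%N) //.
  exact: index_nth.
- by rewrite distinct3_map //; exact: (index_inj 0%N).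
all: by rewrite /cut /fe /f /= !nth_index // !inE eqxx ?orbT.
Qed.

Lemma half_cut_bounded (N : nat) (L : seq (nat * nat)) :
    (forall e, e \in L -> (e.1 < e.2 < N)%N) ->
  exists c : nat -> bool, (size L <= 2 * count (cut c) L)%N.
Proof.
elim: N L => [|N IH] L lt_L.
  case: L lt_L => [|e L] lt_L; first by exists xpredT.
  by have := lt_L e (mem_head _ _); rewrite ltn0 andbF.
pose p (e : nat * nat) := e.2 != N.
pose L0 := filter p L; pose L1 := filter (predC p) L.
have [|c cut_L0] := IH L0.
  move=> e; rewrite mem_filter /p => /andP[ne_N /lt_L /andP[-> lt_e]].
  by rewrite /= ltn_neqAle ne_N -ltnS.
have [b cut_L1] : exists b, (size L1 <= 2 * count (fun e => c e.1 != b) L1)%N.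
  have split1 : (count (fun e => c e.1 != false) L1
                 + count (fun e => c e.1 != true) L1 = size L1)%N.
    rewrite -(count_predC (fun e => c e.1 != false)); congr addn.
    by apply: eq_count => -[a ?] /=; case: (c a).
  have [le_L1|lt_L1] := leqP (size L1) (2 * count (fun e => c e.1 != false) L1).
    by exists false.
  by exists true; lia.
exists (fun v => if v == N then b else c v).
have [lt0 lt1] : {in L0, forall e, (e.1 < N)%N /\ (e.2 < N)%N} /\
                 {in L1, forall e, (e.1 < N)%N /\ e.2 = N}.
  by split=> -[u v]; rewrite mem_filter /p
    => /andP[/= ne_N /lt_L/andP[/= ? ?]]; lia.
have perm_L := permEl (perm_filterC p L).
rewrite -(permP perm_L) -(perm_size perm_L) count_cat size_cat.
rewrite -/L0 -/L1 (eq_in_count (a2 := cut c)); last first.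
  by move=> e /lt0[e1N e2N]; rewrite /cut (ltn_eqF e1N) (ltn_eqF e2N).
rewrite (eq_in_count (a2 := fun e => c e.1 != b) (s := L1)) ?mulnDr ?leq_add //.
by move=> e /lt1[e1N e2N]; rewrite /cut e2N (ltn_eqF e1N) eqxx.
Qed.

Lemma half_cut (L : seq (nat * nat)) :
    (forall e, e \in L -> (e.1 < e.2)%N) ->
  exists c : nat -> bool, (size L <= 2 * count (cut c) L)%N.
Proof.
move=> lt_L; apply: (half_cut_bounded (N := (\max_(e <- L) e.2).+1)) => e e_L.
by rewrite lt_L //= ltnS (leq_bigmax_seq e).
Qed.

Lemma collinear_det3 (p q r : R * R) : collinear p q r -> det3 p q r = 0.
Proof.
by case=> a [b [c [nz_ab [lp [lq lr]]]]]; apply: det3_eq0_of_line lp lq lr.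
Qed.

Lemma inA_edges (t : nat -> R) (P : seq (R * R)) :
    (forall x, x \in P -> inA t x) ->
  exists L : seq (nat * nat),
    P = map (edge_pt t) L /\ forall e, e \in L -> (e.1 < e.2)%N.
Proof.
elim: P => [|x P IH] P_A; first by exists [::].
have [|L [-> lt_L]] := IH.
  by move=> y y_P; apply: P_A; rewrite inE y_P orbT.
have [i [j [lt_ij ->]]] := P_A x (mem_head _ _).
by exists ((i, j) :: L); split=> // e; rewrite inE => /predU1P[-> | /lt_L].
Qed.

Theorem mainTheorem3 (t : nat -> R) (ht : alg_indep_Q t)
  (P : seq (R * R)) (hPu : uniq P) (hPA : forall x, x \in P -> inA t x) :
  exists P' : seq (R * R),
    [/\ uniq P', {subset P' <= P}, (size P <= 2 * size P')%N
      & no_three_collinear P'].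
Proof.
have [L [P_L lt_L]] := inA_edges hPA.
have [c cut_half] := half_cut lt_L.
have sub_P : subseq (map (edge_pt t) (filter (cut c) L)) P.
  by rewrite P_L map_subseq // filter_subseq.
exists (map (edge_pt t) (filter (cut c) L)); split.
- exact: subseq_uniq sub_P hPu.
- exact: mem_subseq sub_P.
- by rewrite P_L !size_map size_filter.
move=> _ _ _ /mapP[e1 + ->] /mapP[e2 + ->] /mapP[e3 + ->].
rewrite !mem_filter => /andP[c1 _] /andP[c2 _] /andP[c3 _] ne12 ne23 ne13.
move/collinear_det3/eqP; apply/negP; apply: edge_det_cut_neq0 c1 c2 c3 => //.
have distinct_pt e f : edge_pt t e != edge_pt t f -> ~~ same_edge e f.
  by apply: contra => /(edge_pt_same_edge t)->.
by rewrite /distinct3 !distinct_pt.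
Qed.
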